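(* Fix $M>0$. Then $$\alpha(M):=\inf_{T,u,v}\ \mathbb{P}\big(\tau_{u,+}^{X^{(T_{u,v},u)}}=\infty\big)>0,$$ where the infimum is over all trees $T$ which are $M$-bounded subdivisions of a tree with minimum degree at least $3$, and over all pairs of adjacent vertices $u\sim v$ in $T$.
   Context: A subdivision of a graph replaces each edge by a path of finite length; it is $M$-bounded if each such path has length at most $M$. For adjacent vertices $u\sim v$ of a tree $T$, $T_{u,v}$ is the connected component of $u$ in $T$ after removing $v$. $X^{(G,u)}$ denotes simple random walk on the (unweighted, undirected) graph $G$ started at $u$, and $\tau^{X^{(G,u)}}_{u,+}$ is its first return time to $u$ (first time $t\ge1$ at which it is at $u$). *)

From Stdlib Require Import Reals ClassicalEpsilon.
From Coquelicot Require Import Coquelicot.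
From mathcomp Require Import ssreflect ssrfun ssrbool eqtype ssrnat seq path.

Set Implicit Arguments.
Unset Strict Implicit.
Unset Printing Implicit Defensive.
Local Open Scope nat_scope.

Section Graphs.
Variable V : eqType.
Implicit Types (nb : V -> seq V).

Definition adj nb (x y : V) : bool := y \in nb x.

Definition simple_graph nb : Prop :=
  (forall x, uniq (nb x)) /\
  (forall x y, y \in nb x -> x \in nb y) /\
  (forall x, x \notin nb x).

Definition connected nb : Prop :=
  forall x y, exists p, path (adj nb) x p /\ last x p = y.

Definition acyclic nb : Prop :=
  forall x p, path (adj nb) x p -> last x p = x -> uniq p -> size p < 3.

Definition is_tree nb : Prop := simple_graph nb /\ connected nb /\ acyclic nb.

Definition pbool (P : Prop) : bool :=
  if excluded_middle_informative P then true else false.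

(* vertex set of T_{u,v}: the component of u in T after removing v *)
Definition in_comp nb (u v x : V) : Prop :=
  u != v /\
  exists p, path (fun a b => adj nb a b && (b != v)) u p /\ last u p = x.

(* neighbour lists of the induced subgraph T_{u,v} (meaningful on its vertices) *)
Definition comp_nbrs nb (u v : V) : V -> seq V :=
  fun x => [seq y <- nb x | pbool (in_comp nb u v y)].

(* noret nb u n x = P_x(X_1 <> u, ..., X_n <> u) for simple random walk on nb *)
Fixpoint noret nb (u : V) (n : nat) (x : V) : R :=
  match n with
  | O => 1%R
  | S n' => (/ INR (size (nb x)) *
             foldr Rplus 0%R
               (map (fun y => if y == u then 0%R else noret nb u n' y) (nb x)))%R
  end.

(* P(tau^{X^{(G,u)}}_{u,+} = infinity) = lim_n P(tau_{u,+} > n) *)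
Definition escape_prob nb (u : V) : Rbar :=
  Lim_seq (fun n => noret nb u n u).

End Graphs.

(* T (on V) is an M-bounded subdivision of S (on W): branch vertices phi a,
   and for each edge ab of S a path phi a, P a b, phi b in T of length <= M;
   these paths are internally disjoint, internal vertices are not branch
   vertices, and they cover all vertices and edges of T. *)
Definition bounded_subdivision (M : nat) (W V : eqType)
  (nbS : W -> seq W) (nbT : V -> seq V) : Prop :=
  exists (phi : W -> V) (P : W -> W -> seq V),
    injective phi /\
    (forall a b, b \in nbS a ->
       [/\ path (adj nbT) (phi a) (rcons (P a b) (phi b)),
           size (P a b) < M,
           P b a = rev (P a b),
           uniq (P a b) &
           forall x c, x \in P a b -> x != phi c]) /\
    (forall a b c d x, b \in nbS a -> d \in nbS c ->
       x \in P a b -> x \in P c d -> (a = c /\ b = d) \/ (a = d /\ b = c)) /\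
    (forall x, (exists a, x = phi a) \/
               (exists a b, b \in nbS a /\ x \in P a b)) /\
    (forall x y, y \in nbT x -> exists a b, b \in nbS a /\
       let s := phi a :: rcons (P a b) (phi b) in (x, y) \in zip s (behead s)).

From Stdlib Require Import Reals Lra ClassicalEpsilon.
From Coquelicot Require Import Coquelicot.
From mathcomp Require Import ssreflect ssrfun ssrbool eqtype ssrnat seq path.
From mathcomp Require Import zify.

Set Implicit Arguments.
Unset Strict Implicit.
Unset Printing Implicit Defensive.

(* Root T_{u,v} at u and give a vertex x the potential G(x): the length of the
   path from u to x in which a step counts 2^-k once k branch vertices have
   been passed. Away from u, G is subharmonic: at a subdivision vertex (degree
   2) the next increment equals the previous one, and at a branch vertex it
   halves but there are at least two forward neighbours. Branch vertices occur
   at least every M steps, so G <= 2M. A subharmonic function that is at most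
   1 and vanishes at u stays below the probability of not returning to u
   within n steps, for every n; hence so does G/(2M), and averaging over the
   first step gives escape probability at least 1/(4M). *)

Lemma pboolP (P : Prop) : reflect P (pbool P).
Proof. by rewrite /pbool; case: excluded_middle_informative => h; constructor. Qed.

Lemma mem_zip (T1 T2 : eqType) (s : seq T1) (t : seq T2) x y :
  (x, y) \in zip s t -> (x \in s) && (y \in t).
Proof.
elim: s t => [|a s IH] [|b t] //=; rewrite inE => /predU1P[[= -> ->]|/IH/andP[xs yt]].
  by rewrite eqxx mem_head.
by rewrite xs inE yt !orbT.
Qed.

Section ListSums.
Variable T : eqType.
Implicit Types (F : T -> R) (s : seq T).
Local Open Scope R_scope.

Definition sumR F s := foldr Rplus 0 (map F s).

Lemma sumR_ge_const F s b :
  (forall y, y \in s -> b <= F y) -> INR (size s) * b <= sumR F s.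
Proof.
elim: s => [|y s IH] hb; first by rewrite /sumR /=; lra.
change (INR (size s).+1 * b <= F y + sumR F s); rewrite S_INR.
have := hb y (mem_head y s); have := IH (fun z zs => hb z (predU1r _ _ zs)).
lra.
Qed.

Lemma sumR_ge_pointed F s p a b : uniq s -> p \in s -> a <= F p ->
  (forall y, y \in s -> y != p -> b <= F y) ->
  a + INR (size s).-1 * b <= sumR F s.
Proof.
elim: s => [|y s IH] //; rewrite cons_uniq inE => /andP[ys us] /predU1P[->|ps] ha hb;
  change (a + INR (size s) * b <= F y + sumR F s).
  suff : INR (size s) * b <= sumR F s by lra.
  apply: sumR_ge_const => z zs; apply: hb; first exact: predU1r.
  by apply: contraNneq ys => <-.
have yp : y != p by apply: contraNneq ys => ->.
have := IH us ps ha (fun z zs => hb z (predU1r _ _ zs)).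
have := hb y (mem_head y s) yp.
have -> : INR (size s) = INR (size s).-1 + 1 by rewrite -S_INR prednK //; case: (s) ps.
lra.
Qed.
End ListSums.

Lemma noretS (V : eqType) (nb : V -> seq V) u n x :
  noret nb u n.+1 x =
  (/ INR (size (nb x)) * sumR (fun y => if y == u then 0 else noret nb u n y) (nb x))%R.
Proof. by []. Qed.

Section Trees.
Variables (V : eqType) (nb : V -> seq V).
Hypothesis nb_simple : simple_graph nb.
Hypothesis nb_acyclic : acyclic nb.

Lemma nb_uniq x : uniq (nb x).
Proof. by case: nb_simple. Qed.

Lemma adj_sym x y : adj nb x y = adj nb y x.
Proof. by case: nb_simple => _ [nb_sym _]; apply/idP/idP => /nb_sym. Qed.

Lemma adj_irrefl x : adj nb x x = false.
Proof. by case: nb_simple => _ [_ /(_ x) /negbTE]. Qed.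

(* [last y q] is the predecessor of [x]; any other back edge closes a cycle. *)
Lemma uniq_path_back_adj q x y : sorted (adj nb) (rcons q x) ->
  uniq (rcons q x) -> y \in q -> adj nb x y -> y = last y q.
Proof.
move=> + + yq; case/splitPr: yq => q1 q2 qx uqx xy.
have sub : infix (y :: rcons q2 x) (rcons (q1 ++ y :: q2) x).
  by rewrite rcons_cat; apply: suffix_infix.
have yx : path (adj nb) y (rcons q2 x) := infix_sorted sub qx.
have := nb_acyclic (x := y) (p := rcons (rcons q2 x) y).
rewrite rcons_path rcons_uniq yx /= last_rcons xy.
have := infix_uniq sub uqx; rewrite cons_uniq => /andP[-> ->] /(_ isT (last_rcons _ _ _) isT).
by rewrite !size_rcons last_cat; case: q2 {sub qx uqx yx}.
Qed.

Section Component.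
Variables u v : V.
Hypothesis uv : v \in nb u.

Definition comp_adj a b := adj nb a b && (b != v).

Definition rooted_path s := path comp_adj u s && uniq (u :: s).

Lemma u_neq_v : u != v.
Proof. by apply: contraTneq uv => ->; rewrite -/(adj nb v v) adj_irrefl. Qed.

Lemma comp_path_notin_v a s : path comp_adj a s -> v \notin s.
Proof.
elim: s a => [|y s IH] a //= /andP[/andP[_ yv] /IH].
by rewrite inE negb_or eq_sym yv.
Qed.

Lemma notin_comp_v : ~ in_comp nb u v v.
Proof.
case=> _ [s [us sv]]; have := comp_path_notin_v us.
case: s us sv => [_ /= eq_uv|y s _ /= <-]; last by rewrite mem_last.
by move: u_neq_v; rewrite eq_uv eqxx.
Qed.

Lemma comp_adj_in_comp s y : path comp_adj u s ->
  comp_adj (last u s) y -> in_comp nb u v y.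
Proof.
move=> us sy; split; first exact: u_neq_v.
by exists (rcons s y); rewrite rcons_path last_rcons; split => //; apply/andP.
Qed.

Lemma rooted_path_last_notadj_v r x : rooted_path (rcons r x) -> ~~ adj nb x v.
Proof.
case/andP=> ux urx; apply/negP => xv.
have vq : sorted (adj nb) (rcons [:: v, u & r] x).
  apply/andP; split; first by rewrite adj_sym.
  by apply: sub_path ux => a b /andP[].
have vrx := comp_path_notin_v ux.
have uvq : uniq (rcons [:: v, u & r] x).
  change (uniq (v :: u :: rcons r x)).
  by rewrite cons_uniq urx inE negb_or eq_sym u_neq_v vrx.
have vr : v \notin r by apply: contra vrx; rewrite mem_rcons inE => ->; rewrite orbT.
have /= vlast := uniq_path_back_adj vq uvq (mem_head _ _) xv.
by have := mem_last u r; rewrite -vlast inE (negbTE vr) orbF eq_sym (negbTE u_neq_v).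
Qed.

Lemma rooted_path_belast r x : rooted_path (rcons r x) -> rooted_path r.
Proof.
case/andP; rewrite rcons_path -rcons_cons rcons_uniq.
by case/andP=> ur _ /andP[_ uur]; apply/andP.
Qed.

Lemma rooted_path_rcons r x y : rooted_path (rcons r x) -> y \in nb x ->
  y != last u r -> rooted_path (rcons (rcons r x) y).
Proof.
move=> urx xy ylast; have yv : y != v.
  by apply: contraNneq (rooted_path_last_notadj_v urx) => <-.
case/andP: urx => ux urx.
rewrite /rooted_path rcons_path ux last_rcons /comp_adj [adj _ _ _]xy yv !andTb.
rewrite -rcons_cons rcons_uniq urx andbT -rcons_cons mem_rcons in_cons negb_or.
apply/andP; split; first by apply: contraTneq xy => ->; rewrite -/(adj nb x x) adj_irrefl.
apply: contra ylast => yr; apply/eqP.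
apply: (uniq_path_back_adj (q := u :: r) (x := x)) => //.
by rewrite rcons_cons /=; apply: sub_path ux => a b /andP[].
Qed.

Lemma comp_nbrs_rooted_last r x :
  rooted_path (rcons r x) -> comp_nbrs nb u v x = nb x.
Proof.
move=> urx; rewrite /comp_nbrs; apply/all_filterP/allP => y xy; apply/pboolP.
apply: (comp_adj_in_comp (s := rcons r x)); first by case/andP: urx.
rewrite last_rcons /comp_adj [adj _ _ _]xy /=.
by apply: contraNneq (rooted_path_last_notadj_v urx) => <-.
Qed.

Lemma rooted_path_comp_nbrs_root y : y \in comp_nbrs nb u v u -> rooted_path [:: y].
Proof.
rewrite mem_filter => /andP[/pboolP yc uy].
have yv : y != v by apply: contraPneq yc => ->; exact: notin_comp_v.
rewrite /rooted_path /= /comp_adj [adj _ _ _]uy yv inE !andbT.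
by apply: contraTneq uy => ->; rewrite -/(adj nb y y) adj_irrefl.
Qed.

Lemma comp_nbrs_root_gt0 : (2 <= size (nb u))%N -> (0 < size (comp_nbrs nb u v u))%N.
Proof.
move=> deg2; have : (0 < size (rem v (nb u)))%N by rewrite size_rem //; lia.
case E: (rem v (nb u)) => [//|y t] _.
have : y \in rem v (nb u) by rewrite E mem_head.
rewrite mem_rem_uniq ?nb_uniq // inE => /andP[yv uy].
have : y \in comp_nbrs nb u v u.
  rewrite mem_filter uy andbT; apply/pboolP.
  by apply: (comp_adj_in_comp (s := [::])) => //; rewrite /comp_adj [adj _ _ _]uy.
by case: (comp_nbrs _ _ _ _).
Qed.

End Component.

End Trees.

Section DampedLength.
Variables (T : eqType) (f : T -> bool) (M : nat).
Local Open Scope R_scope.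

(* Each step of the walk [x :: s] counts 2^-k, where k is the number of
   marked vertices among [x] and the vertices visited before the step. *)
Fixpoint damped_length (x : T) (s : seq T) : R :=
  if s is y :: s' then (/2) ^ f x * (1 + damped_length y s') else 0.

Lemma damped_length_rcons x s y :
  damped_length x (rcons s y) = damped_length x s + (/2) ^ count f (x :: s).
Proof.
elim: s x => [|z s IH] x /=; first by rewrite addn0; ring.
by rewrite IH /= [in RHS]pow_add; ring.
Qed.

Lemma damped_length_superharmonic x r y k : 1 <= k * (/2) ^ f y ->
  (k + 1) * damped_length x (rcons r y) <=
  damped_length x r + k * (damped_length x (rcons r y) + (/2) ^ count f (x :: rcons r y)).
Proof.
rewrite -cats1 -cat_cons count_cat [count f [:: y]]/= addn0 pow_add cats1.
rewrite damped_length_rcons.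
have : 0 < (/2) ^ count f (x :: r) by apply: pow_lt; lra.
nra.
Qed.

Definition short_runs (t : seq T) :=
  forall r, infix r t -> all (predC f) r -> (size r < M)%N.

Lemma short_runs_catl t1 t2 : short_runs (t1 ++ t2) -> short_runs t2.
Proof. by move=> runs r /(infix_catl t1); apply: runs. Qed.

Lemma short_runs_gt0 t : short_runs t -> (0 < M)%N.
Proof. by move=> runs; apply: (runs [::]); rewrite ?infix0s. Qed.

Lemma short_runs_prefix pre x s : all (predC f) pre -> ~~ f x ->
  short_runs (pre ++ x :: s) -> ((size pre).+1 < M)%N.
Proof.
move=> pre_run fx runs; rewrite -(size_rcons pre x); apply: runs.
  by rewrite -cat_rcons prefix_infix.
by rewrite all_rcons pre_run andbT.
Qed.

Lemma damped_length_run_bound pre x s : all (predC f) pre ->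
  short_runs (pre ++ x :: s) ->
  damped_length x s + (if f x then INR M else INR (size pre).+1) <= 2 * INR M.
Proof.
elim: s pre x => [|y s IH] pre x pre_run runs.
all: have M_ge1 : 1 <= INR M by apply/(le_INR 1)/leP; apply: short_runs_gt0 runs.
all: have x_run : ~~ f x -> INR (size pre).+1 + 1 <= INR M
  by move=> fx; rewrite -S_INR; apply/le_INR/leP; apply: short_runs_prefix runs.
  by case: (f x) x_run => /= x_run; [lra | have := x_run isT; lra].
have tail_runs : short_runs (y :: s).
  by apply: (short_runs_catl (t1 := rcons pre x)); rewrite cat_rcons.
rewrite [damped_length _ _]/=; case fx: (f x) x_run => x_run.
  by have := IH [::] y isT tail_runs; case: (f y) => /=; lra.
have {x_run} := x_run isT; case fy: (f y).
  by have := IH [::] y isT tail_runs; rewrite fy /=; lra.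
have y_run : all (predC f) (rcons pre x) by rewrite all_rcons pre_run andbT /= fx.
have := IH _ y y_run; rewrite cat_rcons fy size_rcons S_INR => /(_ runs).
rewrite /=; lra.
Qed.

Lemma damped_length_le x s : short_runs (x :: s) -> damped_length x s <= 2 * INR M.
Proof.
move=> runs; have := damped_length_run_bound (pre := [::]) isT runs.
by case: (f x); have := pos_INR M; rewrite /=; lra.
Qed.

End DampedLength.

Section Subdivision.
Variables (M : nat) (W V : eqType) (nbS : W -> seq W) (nbT : V -> seq V).
Variables (phi : W -> V) (P : W -> W -> seq V).
Hypothesis M_gt0 : (0 < M)%N.
Hypothesis nbS_simple : simple_graph nbS.
Hypothesis nbS_deg3 : forall a, (3 <= size (nbS a))%N.
Hypothesis nbT_simple : simple_graph nbT.
Hypothesis phi_inj : injective phi.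
Hypothesis segP : forall a b, b \in nbS a ->
  [/\ path (adj nbT) (phi a) (rcons (P a b) (phi b)),
      (size (P a b) < M)%N,
      P b a = rev (P a b),
      uniq (P a b) &
      forall x c, x \in P a b -> x != phi c].
Hypothesis seg_disjoint : forall a b c d x, b \in nbS a -> d \in nbS c ->
  x \in P a b -> x \in P c d -> (a = c /\ b = d) \/ (a = d /\ b = c).
Hypothesis vertex_cover : forall x,
  (exists a, x = phi a) \/ (exists a b, b \in nbS a /\ x \in P a b).
Hypothesis edge_cover : forall x y, y \in nbT x -> exists a b, b \in nbS a /\
  let s := phi a :: rcons (P a b) (phi b) in (x, y) \in zip s (behead s).

Definition branch x := pbool (exists a, x = phi a).

Lemma branch_phi a : branch (phi a).
Proof. by apply/pboolP; exists a. Qed.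

Lemma seg_nonbranch a b x : b \in nbS a -> x \in P a b -> ~~ branch x.
Proof.
move=> ab xab; apply/pboolP => -[c xc].
by case: (segP ab) => _ _ _ _ /(_ x c xab); rewrite xc eqxx.
Qed.

Lemma nonbranch_in_seg x : ~~ branch x -> exists a b, b \in nbS a /\ x \in P a b.
Proof. by case: (vertex_cover x) => // -[a ->]; rewrite branch_phi. Qed.

Lemma nonbranch_on_seg_path a b x : ~~ branch x ->
  x \in phi a :: rcons (P a b) (phi b) -> x \in P a b.
Proof.
move=> xnb; rewrite in_cons mem_rcons in_cons.
by case/predU1P => [xa|/predU1P[xb|//]]; move: xnb; rewrite ?xa ?xb branch_phi.
Qed.

Lemma seg_adj_closed a b x y : b \in nbS a -> x \in P a b -> ~~ branch y ->
  y \in nbT x -> y \in P a b.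
Proof.
move=> ab xab ynb xy; have [c [d [cd /mem_zip/andP[xs ys]]]] := edge_cover xy.
have xcd := nonbranch_on_seg_path (seg_nonbranch ab xab) xs.
have ycd := nonbranch_on_seg_path ynb (mem_behead ys).
move: ycd; case: (seg_disjoint ab cd xab xcd) => -[<- <-] //.
by case: (segP ab) => _ _ -> _ _; rewrite mem_rev.
Qed.

Lemma nonbranch_path_in_seg x s : path (adj nbT) x s ->
  all (predC branch) (x :: s) -> exists a b, b \in nbS a /\ {subset x :: s <= P a b}.
Proof.
elim: s x => [|y s IH] x /=.
  move=> _ /andP[xnb _]; have [a [b [ab xab]]] := nonbranch_in_seg xnb.
  by exists a, b; split=> // z; rewrite inE => /eqP ->.
case/andP=> xy ys /andP[xnb ynb_s]; have [a [b [ab sub]]] := IH y ys ynb_s.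
exists a, b; split=> // z; rewrite in_cons => /predU1P[->|]; last exact: sub.
apply: seg_adj_closed ab (sub y (mem_head y s)) xnb _.
by rewrite -/(adj nbT y x) adj_sym.
Qed.

Lemma uniq_path_short_runs x s : path (adj nbT) x s -> uniq (x :: s) ->
  short_runs branch M (x :: s).
Proof.
move=> xs uxs [|y t] // sub ynb; have yt : path (adj nbT) y t := infix_sorted sub xs.
have [a [b [ab sub_ab]]] := nonbranch_path_in_seg yt ynb.
apply: leq_ltn_trans (uniq_leq_size (infix_uniq sub uxs) sub_ab) _.
by case: (segP ab).
Qed.

Lemma size_nbT_branch a : (3 <= size (nbT (phi a)))%N.
Proof.
pose first b := head (phi b) (P a b).
apply: leq_trans (nbS_deg3 a) _; rewrite -(size_map first).
apply: uniq_leq_size => [|_ /mapP[b ab ->]].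
  rewrite map_inj_in_uniq ?nb_uniq // => b b' ab ab'; rewrite /first.
  have nb_in_P c z s : c \in nbS a -> P a c = z :: s -> ~~ branch z.
    by move=> ac Pc; apply: (seg_nonbranch ac); rewrite Pc mem_head.
  case Pb: (P a b) => [|z s]; case Pb': (P a b') => [|z' s'] /=.
  - exact: phi_inj.
  - by move=> bz; have := nb_in_P _ _ _ ab' Pb'; rewrite -bz branch_phi.
  - by move=> zb; have := nb_in_P _ _ _ ab Pb; rewrite zb branch_phi.
  move=> zz; have zb : z \in P a b by rewrite Pb mem_head.
  have zb' : z \in P a b' by rewrite Pb' zz mem_head.
  have [[_ //] | [_ ba]] := seg_disjoint ab ab' zb zb'.
  by move: ab; rewrite ba -/(adj nbS a a) adj_irrefl.
by case: (segP ab) => + _ _ _ _; rewrite /first; case: (P a b) => [|z s] /= /andP[].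
Qed.

Lemma size_nbT_nonbranch x : ~~ branch x -> (2 <= size (nbT x))%N.
Proof.
move=> xnb; have [a [b [ab xab]]] := nonbranch_in_seg xnb.
case: (segP ab) => /(pathP x) step _ _ uP Pnb; set q := rcons (P a b) (phi b).
have uq : uniq (phi a :: q).
  have phi_notin_P c : phi c \notin P a b by apply/negP => /(Pnb _ c); rewrite eqxx.
  rewrite cons_uniq rcons_uniq uP andbT mem_rcons in_cons negb_or !phi_notin_P !andbT.
  by apply: contraTneq ab => /phi_inj ->; rewrite -/(adj nbS b b) adj_irrefl.
have iP : (index x (P a b) < size (P a b))%N by rewrite index_mem.
set i := index x (P a b) in iP.
have qi : nth x q i = x by rewrite nth_rcons iP nth_index.
have pred_x : adj nbT (nth x (phi a :: q) i) x.
  by have := step i; rewrite size_rcons qi => /(_ (leqW iP)).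
have x_succ : adj nbT x (nth x q i.+1).
  by have := step i.+1; rewrite size_rcons /= qi => /(_ iP).
have pred_succ : nth x (phi a :: q) i != nth x (phi a :: q) i.+2.
  have sz : size (phi a :: q) = (size (P a b)).+2 by rewrite /= size_rcons.
  by rewrite nth_uniq ?sz //; lia.
apply: (uniq_leq_size (s1 := [:: nth x (phi a :: q) i; nth x q i.+1])).
  by rewrite /= inE pred_succ.
by move=> z; rewrite !inE => /orP[] /eqP ->; rewrite // -/(adj nbT x _) adj_sym.
Qed.

Lemma size_nbT_ge2 x : (2 <= size (nbT x))%N.
Proof.
case: (boolP (branch x)) => [/pboolP[a ->]|]; last exact: size_nbT_nonbranch.
exact: leq_trans (size_nbT_branch a).
Qed.

Lemma halved_degree_ge1 x : (1 <= INR (size (nbT x)).-1 * (/2) ^ branch x)%R.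
Proof.
case: (boolP (branch x)) => [/pboolP[a ->]|_]; last first.
  have /leP/le_INR : (1 <= (size (nbT x)).-1)%N by have := size_nbT_ge2 x; lia.
  by rewrite /=; lra.
have /leP/le_INR : (2 <= (size (nbT (phi a))).-1)%N by have := size_nbT_branch a; lia.
by rewrite /=; lra.
Qed.

Section Escape.
Hypothesis nbT_acyclic : acyclic nbT.
Variables u v : V.
Hypothesis uv : v \in nbT u.
Local Open Scope R_scope.

Let G := damped_length branch u.
Let noret_uv := noret (comp_nbrs nbT u v) u.

(* Indexing by rooted paths rather than by vertices avoids choosing the
   unique path from [u] to a vertex. *)
Lemma noret_ge_damped_length n s : rooted_path nbT u v s -> s != [::] ->
  / (2 * INR M) * G s <= noret_uv n (last u s).
Proof.
have M_pos : 0 < INR M by apply/lt_0_INR/ltP.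
have c_pos : 0 < / (2 * INR M) by apply: Rinv_0_lt_compat; lra.
have cK : / (2 * INR M) * (2 * INR M) = 1 by rewrite Rinv_l //; lra.
elim: n s => [|n IH] s us s0.
  have : G s <= 2 * INR M.
    case/andP: us => us uus; apply/damped_length_le/uniq_path_short_runs => //.
    by apply: sub_path us => a b /andP[].
  by rewrite /noret_uv /=; nra.
case/lastP: s us s0 => [//|r x] us _.
rewrite last_rcons /noret_uv noretS (comp_nbrs_rooted_last nbT_simple nbT_acyclic uv us).
set p := last u r; set F := fun y => if y == u then 0 else noret_uv n y.
have u_notin : u \notin rcons r x by case/andP: us => _ /andP[].
have px : p \in nbT x.
  by case/andP: us; rewrite rcons_path => /andP[_ /andP[+ _]] _; rewrite -/(adj _ _ _) adj_sym.
have Fp : / (2 * INR M) * G r <= F p.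
  have [r0|r0] := eqVneq r [::]; first by rewrite /F /p r0 eqxx /G /=; lra.
  have pu : p != u.
    apply: contraNneq u_notin => <-; rewrite mem_rcons inE /p.
    by case: (r) r0 => // z r' _; rewrite [last _ _]/= mem_last orbT.
  by rewrite /F (negbTE pu); apply: IH r0; apply: rooted_path_belast us.
have Fy y : y \in nbT x -> y != p ->
    / (2 * INR M) * (G (rcons r x) + (/2) ^ count branch (u :: rcons r x)) <= F y.
  move=> xy yp; have uy := rooted_path_rcons nbT_simple nbT_acyclic uv us xy yp.
  have yu : y != u.
    by case/andP: uy => _; rewrite -rcons_cons rcons_uniq in_cons => /andP[/norP[]].
  rewrite /F (negbTE yu) -/G -(damped_length_rcons _ _ _ y).
  by have := IH _ uy; rewrite last_rcons; apply; case: (rcons r x).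
have := sumR_ge_pointed (nb_uniq nbT_simple x) px Fp Fy.
have := damped_length_superharmonic u r (halved_degree_ge1 x); rewrite -/G.
have -> : INR (size (nbT x)) = INR (size (nbT x)).-1 + 1.
  by rewrite -S_INR prednK //; have := size_nbT_ge2 x; lia.
set d := INR (size (nbT x)).-1; have d_ge0 : 0 <= d by apply: pos_INR.
move=> super sum; apply: (Rmult_le_reg_l (d + 1)); first lra.
rewrite -[in X in _ <= X]Rmult_assoc Rinv_r ?Rmult_1_l; last lra.
have := Rmult_le_compat_l _ _ _ (Rlt_le _ _ c_pos) super; lra.
Qed.

Lemma noret_root_ge n : / (4 * INR M) <= noret_uv n u.
Proof.
have M_ge1 : 1 <= INR M by apply/(le_INR 1)/leP.
case: n => [|n]; first by rewrite /noret_uv /= -Rinv_1; apply: Rinv_le_contravar; lra.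
rewrite /noret_uv noretS; set s := comp_nbrs nbT u v u.
have s_pos : 0 < INR (size s).
  exact/lt_0_INR/ltP/(comp_nbrs_root_gt0 nbT_simple uv (size_nbT_ge2 u)).
have Fs y : y \in s -> / (4 * INR M) <= if y == u then 0 else noret_uv n y.
  move=> ys; have uy := rooted_path_comp_nbrs_root nbT_simple uv ys.
  have yu : y != u by case/andP: uy => _; rewrite /= inE andbT eq_sym.
  rewrite (negbTE yu); have := noret_ge_damped_length n uy isT.
  have -> : / (4 * INR M) = / (2 * INR M) * / 2 by field; lra.
  have c_pos : 0 < / (2 * INR M) by apply: Rinv_0_lt_compat; lra.
  by rewrite /G /=; case: (branch u) => /=; nra.
have := sumR_ge_const Fs; move: s_pos; set k := INR (size s) => k_pos sum.
apply: (Rmult_le_reg_l k) => //.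
by rewrite -[in X in _ <= X]Rmult_assoc Rinv_r ?Rmult_1_l //; lra.
Qed.

End Escape.

End Subdivision.

Theorem mainTheorem9 (M : nat) (hM : (0 < M)%N) :
  exists c : R, (0 < c)%R /\
    forall (W V : eqType) (nbS : W -> seq W) (nbT : V -> seq V),
      is_tree nbS -> (forall a, (3 <= size (nbS a))%N) ->
      is_tree nbT -> bounded_subdivision M nbS nbT ->
      forall u v : V, v \in nbT u ->
        Rbar_le (Finite c) (escape_prob (comp_nbrs nbT u v) u).
Proof.
exists (/ (4 * INR M))%R; split.
  by apply: Rinv_0_lt_compat; have := lt_0_INR M (elimT ltP hM); lra.
move=> W V nbS nbT [nbS_simple _] nbS_deg3 [nbT_simple [_ nbT_acyclic]].
move=> [phi [P [phi_inj [segP [seg_disjoint [vertex_cover edge_cover]]]]]] u v uv.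
rewrite /escape_prob -Lim_seq_const; apply: Lim_seq_le_loc; exists 0%N => n _.
exact: (noret_root_ge hM nbS_simple nbS_deg3 nbT_simple phi_inj segP seg_disjoint
          vertex_cover edge_cover nbT_acyclic uv).
Qed.
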